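(* Consider a discounted Markov decision problem with discount factor $\gamma\in(0,1)$ and the inexact policy mirror descent method as described in the context, with $\pi^{(0)}\in\operatorname{rint}\Pi$, and suppose that $\|\widehat Q(\pi^{(k)})-Q(\pi^{(k)})\|_\infty\le\tau$ for all $k\ge0$. Let $\rho\in\Delta(\mathcal{S})$ and $\vartheta_\rho=\frac1{1-\gamma}\|d_\rho(\pi^\star)/\rho\|_\infty$. If the (positive) step sizes satisfy $\eta_0\ge\frac{1-\gamma}{\gamma}D^\star_0$ and $\eta_{k+1}\ge\eta_k/\gamma$ for all $k\ge0$, then for all $k\ge0$, \[ V_\rho(\pi^{(k)})-V_\rho^\star\le\Bigl(1-\frac1{\vartheta_\rho}\Bigr)^k\frac2{1-\gamma}+\frac{4\vartheta_\rho}{1-\gamma}\tau . \]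
   Context: A discounted Markov decision problem (cost-minimization form): finite state set $\mathcal{S}$, finite action set $\mathcal{A}$, transition probabilities $P(s'|s,a)$, cost $R:\mathcal{S}\times\mathcal{A}\to[0,1]$, discount $\gamma$. Policies $\Pi=\Delta(\mathcal{A})^{|\mathcal{S}|}$; $\operatorname{rint}\Pi$ is the set of policies with all entries $\pi_{s,a}>0$. $V_s(\pi)=\mathbf{E}\bigl[\sum_{t\ge0}\gamma^tR(s_t,a_t)\mid s_0=s\bigr]$ with $a_t\sim\pi_{s_t}$, $s_{t+1}\sim P(\cdot|s_t,a_t)$; $V_\rho(\pi)=\sum_s\rho_sV_s(\pi)$; $V_\rho^\star=\min_{\pi\in\Pi}V_\rho(\pi)$; $\pi^\star$ denotes a policy minimizing $V_s$ simultaneously for all $s$. $Q_{s,a}(\pi)=R_{s,a}+\gamma\sum_{s'}P(s'|s,a)V_{s'}(\pi)$. Discounted state visitation: $d_{s,s'}(\pi)=(1-\gamma)\sum_{t\ge0}\gamma^t\Pr^\pi(s_t=s'\mid s_0=s)$, $d_{\rho,s'}(\pi)=\sum_s\rho_sd_{s,s'}(\pi)$. For $p,q\in\Delta(\mathcal{S})$, $\|p/q\|_\infty=\max_sp_s/q_s$ with $0/0=1$. Bregman divergence: $h:\mathbf{R}^{|\mathcal{A}|}\to\mathbf{R}\cup\{+\infty\}$ is a convex function of Legendre type (proper, closed, essentially smooth, strictly convex on the relative interior of its domain) with $\Delta(\mathcal{A})\subseteq\operatorname{dom}h$ and $\operatorname{rint}\Delta(\mathcal{A})\subseteq\operatorname{rint}\operatorname{dom}h$;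 $D(p,p')=h(p)-h(p')-\langle\nabla h(p'),p-p'\rangle$. Inexact policy mirror descent: given estimates $\widehat Q(\pi^{(k)})\in\mathbf{R}^{|\mathcal{S}|\times|\mathcal{A}|}$ of $Q(\pi^{(k)})$, for each $s$, $\pi^{(k+1)}_s=\arg\min_{p\in\Delta(\mathcal{A})}\{\eta_k\langle\widehat Q_s(\pi^{(k)}),p\rangle+D(p,\pi^{(k)}_s)\}$. Notation: $D^\star_k=\sum_sd_{\rho,s}(\pi^\star)D(\pi^\star_s,\pi^{(k)}_s)$. *)

From HB Require Import structures.
From mathcomp Require Import all_boot all_order all_algebra.
From mathcomp Require Import all_classical all_reals all_analysis.
Set Implicit Arguments. Unset Strict Implicit. Unset Printing Implicit Defensive.
Import Order.TTheory GRing.Theory Num.Theory.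
Import numFieldNormedType.Exports.
Local Open Scope classical_set_scope.
Local Open Scope ring_scope.

Section ConvexAnalysis.
Variables (R : realType) (n : nat).
Local Notation V := 'rV[R]_n.

Definition simplex : set V :=
  [set p | (forall j, 0 <= p ord0 j) /\ \sum_j p ord0 j = 1].

Definition aff_hull (C : set V) : set V :=
  [set x | exists (k : nat) (y : 'I_k -> V) (l : 'I_k -> R),
      (forall i, C (y i)) /\ \sum_i l i = 1 /\ x = \sum_i l i *: y i].

Definition rint (C : set V) : set V :=
  [set x | C x /\ exists2 e : R, 0 < e &
      forall z, aff_hull C z -> `|z - x| < e -> C z].

Definition dotv (u v : V) : R := \sum_j u ord0 j * v ord0 j.

Definition edom (h : V -> \bar R) : set V := [set x | (h x < +oo)%E].

Definition proper_fun (h : V -> \bar R) :=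
  (forall x, (-oo < h x)%E) /\ exists x, edom h x.

Definition lsc_fun (h : V -> \bar R) :=
  forall x (a : R), (a%:E < h x)%E -> \forall y \near x, (a%:E < h y)%E.

Definition convex_efun (h : V -> \bar R) :=
  forall x y (t : R), 0 < t < 1 ->
    (h ((t *: x + (1 - t) *: y)%R) <= t%:E * h x + (1 - t)%:E * h y)%E.

Definition grad (h : V -> \bar R) (x : V) : V :=
  \row_j 'D_(delta_mx ord0 j) (fine \o h) x.

Definition essentially_smooth (h : V -> \bar R) :=
  (exists x, interior (edom h) x) /\
  (forall x, interior (edom h) x -> differentiable (fine \o h) x) /\
  (forall (u : nat -> V) (x : V),
      (forall k, interior (edom h) (u k)) ->
      u @ \oo --> x -> ~ interior (edom h) x ->
      (fun k => `|grad h (u k)|) @ \oo --> +oo).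

Definition strictly_convex_on (h : V -> \bar R) (C : set V) :=
  forall x y (t : R), C x -> C y -> x != y -> 0 < t < 1 ->
    (h ((t *: x + (1 - t) *: y)%R) < t%:E * h x + (1 - t)%:E * h y)%E.

Definition legendre (h : V -> \bar R) :=
  [/\ proper_fun h, lsc_fun h, convex_efun h, essentially_smooth h
    & strictly_convex_on h (rint (edom h))].

Definition bregman (h : V -> \bar R) (p p' : V) : R :=
  fine (h p) - fine (h p') - dotv (grad h p') (p - p').

End ConvexAnalysis.

Section MDP.
Variables (R : realType) (S : finType) (n : nat).
Variables (P : S -> 'I_n -> S -> R) (c : S -> 'I_n -> R) (gamma : R).

Definition policy := S -> 'rV[R]_n.

Definition is_policy (pi : policy) := forall s, simplex (pi s).

Definition rint_policy (pi : policy) :=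
  is_policy pi /\ forall s a, 0 < pi s ord0 a.

Definition Ppi (pi : policy) (s s' : S) : R := \sum_a pi s ord0 a * P s a s'.
Definition cpi (pi : policy) (s : S) : R := \sum_a pi s ord0 a * c s a.

(* prob pi t s s' = Pr^pi(s_t = s' | s_0 = s) *)
Fixpoint prob (pi : policy) (t : nat) (s s' : S) : R :=
  match t with
  | 0 => (s == s')%:R
  | t'.+1 => \sum_s'' prob pi t' s s'' * Ppi pi s'' s'
  end.

(* V_s(pi) = E[sum_t gamma^t c(s_t,a_t) | s_0 = s] = sum_t gamma^t E[c(s_t,a_t)] *)
Definition Vf (pi : policy) (s : S) : R :=
  limn (fun N => \sum_(t < N) gamma ^+ t * \sum_s' prob pi t s s' * cpi pi s').

Definition Vrho (pi : policy) (rho : S -> R) : R := \sum_s rho s * Vf pi s.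

Definition Vstar (rho : S -> R) : R :=
  inf [set Vrho pi rho | pi in is_policy].

Definition Qf (pi : policy) (s : S) (a : 'I_n) : R :=
  c s a + gamma * \sum_s' P s a s' * Vf pi s'.

Definition dvis (pi : policy) (s s' : S) : R :=
  (1 - gamma) * limn (fun N => \sum_(t < N) gamma ^+ t * prob pi t s s').

Definition drho (pi : policy) (rho : S -> R) (s' : S) : R :=
  \sum_s rho s * dvis pi s s'.

Definition is_distr (rho : S -> R) := (forall s, 0 <= rho s) /\ \sum_s rho s = 1.

(* ||p/q||_oo = max_s p_s/q_s with 0/0 = 1 (and x/0 = +oo for x > 0) *)
Definition ratio_norm (p q : S -> R) : \bar R :=
  \big[Order.max/-oo%E]_s
    (if q s == 0 then (if p s == 0 then 1%E else +oo%E) else (p s / q s)%:E).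

End MDP.

From HB Require Import structures.
From mathcomp Require Import all_boot all_order all_algebra.
From mathcomp Require Import all_classical all_reals all_analysis.
From mathcomp Require Import ring lra.
Import Order.TTheory GRing.Theory Num.Theory.
Import numFieldNormedType.Exports.
Local Open Scope classical_set_scope.
Local Open Scope ring_scope.
Set Implicit Arguments. Unset Strict Implicit. Unset Printing Implicit Defensive.

(* The mirror step is a Bregman proximal step, so the three-point lemma gives, state by
   state, eta_k <Qhat, pi_{k+1} - pistar> <= D(pistar, pi_k) - D(pistar, pi_{k+1}), and the
   step does not increase <Qhat, .>.  Weighting by d = d_rho(pistar), using the performance
   difference lemma for (pi_k, pi_{k+1}) and for (pi_k, pistar), and the bound
   d <= vartheta (1 - gamma) rho <= vartheta d_rho(pi_{k+1}), yields for the gap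
   Delta_k = V_rho(pi_k) - V_rho(pistar)
     (1-gamma) vartheta (Delta_{k+1} - Delta_k) + (1-gamma) Delta_k - 2 tau (vartheta+1)
        <= (D_k - D_{k+1}) / eta_k,        D_k = sum_s d_s D(pistar_s, pi_k s),
   each Q-estimate costing 2 tau.  Since eta_{k+1} >= eta_k / gamma, the potential
   Delta_k + D_k / ((1-gamma) eta_k (vartheta-1)) then contracts by 1 - 1/vartheta up to
   O(tau), and the choice of eta_0 makes it at most 2/(1-gamma) initially.  The iterates
   stay in the interior of dom h, where h is differentiable, because h is essentially
   smooth. *)
Section RowVectors.
Variables (R : realType) (n : nat).
Local Notation V := 'rV[R]_n.

Lemma dotvC (u v : V) : dotv u v = dotv v u.
Proof. by apply: eq_bigr => j _; rewrite mulrC. Qed.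

Lemma dotvDr (u v w : V) : dotv u (v + w) = dotv u v + dotv u w.
Proof. by rewrite /dotv -big_split; apply: eq_bigr => j _; rewrite mxE mulrDr. Qed.

Lemma dotvNr (u v : V) : dotv u (- v) = - dotv u v.
Proof. by rewrite /dotv -sumrN; apply: eq_bigr => j _; rewrite mxE mulrN. Qed.

Lemma dotvBr (u v w : V) : dotv u (v - w) = dotv u v - dotv u w.
Proof. by rewrite dotvDr dotvNr. Qed.

Lemma dotvZr (u v : V) (a : R) : dotv u (a *: v) = a * dotv u v.
Proof. by rewrite /dotv mulr_sumr; apply: eq_bigr => j _; rewrite mxE mulrCA. Qed.

Lemma dotvBl (u v w : V) : dotv (u - v) w = dotv u w - dotv v w.
Proof. by rewrite ![dotv _ w]dotvC dotvBr. Qed.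

Lemma dotvZl (u v : V) (a : R) : dotv (a *: u) v = a * dotv u v.
Proof. by rewrite ![dotv _ v]dotvC dotvZr. Qed.

Lemma dotv0r (u : V) : dotv u 0 = 0.
Proof. by rewrite /dotv big1 // => j _; rewrite mxE mulr0. Qed.

Lemma dotv_delta (u : V) j : dotv u (delta_mx ord0 j) = u ord0 j.
Proof.
rewrite /dotv (bigD1 j) //= big1 ?addr0; first by rewrite mxE !eqxx mulr1.
by move=> i ij; rewrite mxE (negbTE ij) andbF mulr0.
Qed.

Lemma dotv_row (F : 'I_n -> R) (v : V) : dotv (\row_a F a) v = \sum_a F a * v ord0 a.
Proof. by apply: eq_bigr => a _; rewrite mxE. Qed.

Lemma ler_norm_entry (v : V) j : `|v ord0 j| <= `|v|.
Proof.
rewrite [X in _ <= X]mx_normrE.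
exact: (le_bigmax 0 (fun ij : 'I_1 * 'I_n => `|v ij.1 ij.2|) (ord0, j)).
Qed.

Lemma norm_row_le (v : V) (B : R) : 0 <= B -> (forall j, `|v ord0 j| <= B) -> `|v| <= B.
Proof.
move=> B0 Hj; rewrite [X in X <= _]mx_normrE; apply/bigmax_leP; split => // -[i j] _.
by rewrite (ord1 i); apply: Hj.
Qed.

Lemma norm_delta_le1 j : `|delta_mx ord0 j : V| <= 1.
Proof.
by apply: norm_row_le => // i; rewrite mxE; case: (_ && _) => /=; rewrite ?normr1 ?normr0.
Qed.

Lemma interiorP (A : set V) x :
  interior A x <-> exists2 e : R, 0 < e & forall y, `|x - y| < e -> A y.
Proof.
split; first by move/nbhs_normP => [e /= e0 He]; exists e => // y Hy; apply: He.
move=> [e e0 He]; apply/nbhs_ballP; exists e => // y; rewrite -ball_normE /=; exact: He.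
Qed.

Lemma cvg_diff_quotient_right (f : V -> R) (x d : V) : differentiable f x ->
  (fun s : R => s^-1 * (f (x + s *: d) - f x)) @ 0^'+ -->
     dotv (\row_j 'D_(delta_mx ord0 j) f x) d.
Proof.
move=> df; have Hder := @diff_derivable _ _ _ f x d df.
have Hcvg : (fun s : R => s^-1 *: ((f \o shift x) (s *: d) - f x)) @ 0^'+ -->
   lim ((fun s : R => s^-1 *: ((f \o shift x) (s *: d) - f x)) @ 0^').
  apply: cvg_trans Hder; apply: cvg_app => A /=.
  rewrite !near_simpl /= !near_withinE; apply: filterS => y Hy y0.
  by apply: Hy; rewrite gt_eqF.
have -> : dotv (\row_j 'D_(delta_mx ord0 j) f x) d = 'D_d f x.
  rewrite deriveE // [in RHS](row_sum_delta d) linear_sum /dotv; apply: eq_bigr => j _.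
  by rewrite linearZ /= mxE deriveE // mulrC.
apply: cvg_trans Hcvg; apply: near_eq_cvg; apply: nearW => s.
by rewrite /= [s *: d + x]addrC.
Qed.

Local Notation simp := (@simplex R n).

Lemma simplex_conv (p q : V) (t : R) : simp p -> simp q -> 0 <= t <= 1 ->
  simp (t *: p + (1 - t) *: q).
Proof.
move=> [p0 p1] [q0 q1] /andP[t0 t1]; split.
  by move=> j; rewrite !mxE addr_ge0 // mulr_ge0 // subr_ge0.
rewrite (eq_bigr (fun j => t * p ord0 j + (1 - t) * q ord0 j)); last first.
  by move=> j _; rewrite !mxE.
by rewrite big_split /= -!mulr_sumr p1 q1 !mulr1 addrC subrK.
Qed.

Lemma rint_simplex (p : V) : simp p -> (forall j, 0 < p ord0 j) -> rint simp p.
Proof.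
move=> Sp Hp; split => //.
set e := \big[Num.min/1]_j p ord0 j.
have e0 : 0 < e.
  apply: (big_ind (fun x => 0 < x)) => // a b a0 b0.
  by rewrite lt_min a0 b0.
exists e => // z [k [y [l [Hy [Hl ->]]]]] Hz; split.
  move=> j; have := ler_norm_entry (\sum_i l i *: y i - p) j; rewrite !mxE => Hj.
  have ej : e <= p ord0 j by exact: bigmin_le.
  have := ler_norm (- ((\sum_i l i *: y i) ord0 j - p ord0 j)); rewrite normrN.
  by lra.
rewrite (eq_bigr (fun j => \sum_i l i * y i ord0 j)); last first.
  by move=> j _; rewrite summxE; apply: eq_bigr => i _; rewrite mxE.
rewrite exchange_big /= -Hl; apply: eq_bigr => i _.
by rewrite -mulr_sumr (proj2 (Hy i)) mulr1.
Qed.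

End RowVectors.

Section Legendre.
Variables (R : realType) (n : nat) (h : 'rV[R]_n -> \bar R).
Hypothesis hL : legendre h.
Local Notation V := 'rV[R]_n.
Local Notation f := (fine \o h).
Local Notation simp := (@simplex R n).

Lemma edom_fine x : edom h x -> h x = (f x)%:E.
Proof.
case: hL => [[Hp _] _ _ _ _]; rewrite /edom /= => Hx; have := Hp x.
by case: (h x) Hx.
Qed.

Lemma edom_conv x y t : edom h x -> edom h y -> 0 <= t <= 1 ->
  edom h (t *: x + (1 - t) *: y) /\
  f (t *: x + (1 - t) *: y) <= t * f x + (1 - t) * f y.
Proof.
move=> Ex Ey /andP[t0 t1].
have [->|tn0] := eqVneq t 0.
  by rewrite scale0r add0r subr0 scale1r mul0r add0r mul1r.
have [->|tn1] := eqVneq t 1.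
  by rewrite scale1r subrr scale0r addr0 mul1r mul0r addr0.
have tt : 0 < t < 1 by rewrite !lt_neqAle eq_sym tn0 tn1 t0 t1.
case: hL => [_ _ Hc _ _]; have := Hc x y t tt.
rewrite (edom_fine Ex) (edom_fine Ey) -!EFinM -EFinD => Hle.
have Ez : edom h (t *: x + (1 - t) *: y).
  by rewrite /edom /=; apply: (le_lt_trans Hle); exact: ltry.
by split => //; move: Hle; rewrite (edom_fine Ez) lee_fin.
Qed.

Lemma interior_edom x : interior (edom h) x -> edom h x.
Proof. by move=> /interiorP [e e0]; apply; rewrite subrr normr0. Qed.

Lemma interior_differentiable x : interior (edom h) x -> differentiable f x.
Proof. by case: hL => [_ _ _ [_ [Hd _]] _]; apply: Hd. Qed.

Lemma subgradient x z : interior (edom h) x -> edom h z ->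
  f x + dotv (grad h x) (z - x) <= f z.
Proof.
move=> Ix Ez.
have Hc := cvg_diff_quotient_right (d := z - x) (interior_differentiable Ix).
suff : dotv (grad h x) (z - x) <= f z - f x by rewrite lerBrDl addrC.
apply: (cvgr_to_le Hc).
near=> s.
have s0 : 0 < s by near: s; exact: nbhs_right_gt.
have s1 : s < 1 by near: s; exact: nbhs_right_lt.
have -> : x + s *: (z - x) = s *: z + (1 - s) *: x.
  by rewrite scalerBr scalerBl scale1r addrC -addrA [- _ + _]addrC.
have [_ Hle] := edom_conv Ez (interior_edom Ix) (t:=s) (ltac:(by rewrite !ltW)).
rewrite ler_pdivrMl // mulrC; move: Hle; set a := f (_ + _); nra.
Unshelve. all: by end_near. Qed.

Lemma bregman_ge0 p x : interior (edom h) x -> edom h p -> 0 <= bregman h p x.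
Proof. by move=> Ix Ep; rewrite /bregman; move: (subgradient Ix Ep) => /=; lra. Qed.

Lemma bregmanxx x : bregman h x x = 0.
Proof. by rewrite /bregman [x - x]subrr dotv0r subr0 subrr. Qed.

(* Essential smoothness makes [interior (edom h)] nonempty, so its affine hull is everything. *)
Lemma aff_hull_edom z : aff_hull (edom h) z.
Proof.
case: hL => [_ _ _ [[x0 /interiorP [r r0 Hr]] _] _].
set N := `|z - x0|.
have N0 : 0 <= N by exact: normr_ge0.
set la := r / (2 * (N + 1)).
have la0 : 0 < la by rewrite divr_gt0 // mulr_gt0 // ltr_pwDr.
set w := x0 + la *: (z - x0).
have Ew : edom h w.
  apply: Hr; rewrite /w opprD addrA subrr add0r normrN normrZ gtr0_norm //.
  rewrite /la mulrAC ltr_pdivrMr ?mulr_gt0 ?ltr_pwDr // -/N.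
  by nra.
exists 2%N, (fun i : 'I_2 => if i == ord0 then w else x0),
  (fun i : 'I_2 => if i == ord0 then la^-1 else 1 - la^-1).
split; first by move=> i; case: (i == ord0) => //; apply: Hr; rewrite subrr normr0.
split; first by rewrite !big_ord_recl big_ord0 /= addr0 addrC subrK.
rewrite !big_ord_recl big_ord0 /= addr0; apply/rowP => j; rewrite !mxE /w.
by field; rewrite gt_eqF.
Qed.

Lemma rint_edom_interior y : rint (edom h) y -> interior (edom h) y.
Proof.
move=> [_ [e e0 He]]; apply/interiorP; exists e => // z Hz.
by apply: He; [exact: aff_hull_edom | rewrite distrC].
Qed.

Lemma interior_conv y x t : interior (edom h) y -> edom h x -> 0 < t <= 1 ->
  interior (edom h) (t *: y + (1 - t) *: x).
Proof.
move=> /interiorP [r r0 Hr] Ex /andP[t0 t1]; apply/interiorP.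
exists (t * r); first exact: mulr_gt0.
move=> w Hw; set w' := y + t^-1 *: (w - (t *: y + (1 - t) *: x)).
have Ew' : edom h w'.
  apply: Hr; rewrite /w' opprD addrA subrr add0r normrN normrZ gtr0_norm ?invr_gt0 //.
  by rewrite distrC ltr_pdivrMl.
have -> : w = t *: w' + (1 - t) *: x.
  by apply/rowP => j; rewrite /w' !mxE; field; rewrite gt_eqF.
by apply: (proj1 (edom_conv Ew' Ex _)); rewrite (ltW t0) t1.
Qed.

(* Test the subgradient inequality at [w] against the points [y +- (r/2) e_j]. *)
Lemma grad_bounded y (L K : R) : interior (edom h) y ->
  exists B, forall w, interior (edom h) w -> L <= f w ->
    - K <= dotv (grad h w) (y - w) -> `|grad h w| <= B.
Proof.
move=> /interiorP [r r0 Hr].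
pose z (e : R) j := y + (e * (r / 2)) *: delta_mx ord0 j.
have Ez e j : `|e| = 1 -> edom h (z e j).
  move=> He; apply: Hr; rewrite /z opprD addrA subrr add0r normrN normrZ normrM He mul1r.
  rewrite gtr0_norm ?divr_gt0 //.
  apply: (le_lt_trans (ler_wpM2l _ (norm_delta_le1 _ j))); first by rewrite divr_ge0 ?ltW.
  by rewrite mulr1; lra.
pose M j := (`|f (z 1 j)| + `|f (z (-1) j)| + `|L| + `|K|) / (r / 2).
have M0 j : 0 <= M j by rewrite divr_ge0 ?addr_ge0 ?divr_ge0 ?(ltW r0).
exists (\sum_j M j) => w Iw Lw Kw.
apply: norm_row_le => [|j]; first exact: sumr_ge0.
apply: (@le_trans _ _ (M j)); last by rewrite (bigD1 j) //= lerDl sumr_ge0.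
have Hdir e : `|e| = 1 -> e * (r / 2) * grad h w ord0 j <= `|f (z e j)| + `|L| + `|K|.
  move=> He; have := subgradient Iw (Ez e j He).
  have -> : z e j - w = (y - w) + (e * (r / 2)) *: delta_mx ord0 j.
    by rewrite /z addrAC.
  rewrite dotvDr dotvZr dotv_delta.
  have := ler_norm (f (z e j)); have := ler_norm (- L); have := ler_norm K.
  by rewrite normrN; lra.
have := Hdir 1 (normr1 _); have := Hdir (-1) (ltac:(by rewrite normrN normr1)).
rewrite /M ler_pdivlMr ?divr_gt0 //.
have := normr_ge0 (f (z 1 j)); have := normr_ge0 (f (z (-1) j)).
set g := grad h w ord0 j.
by have [g0|g0] := leP 0 g; [rewrite (ger0_norm g0) | rewrite (ltr0_norm g0)]; nra.
Qed.

Hypothesis simplex_edom : simp `<=` edom h.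

(* Along the segment from an interior point [y] to a boundary minimiser [x] the
   gradient of [h] stays bounded, which essential smoothness forbids. *)
Lemma minimizer_interior (q x y : V) :
  interior (edom h) y -> simp y -> simp x ->
  (forall p, simp p -> dotv q x + f x <= dotv q p + f p) ->
  interior (edom h) x.
Proof.
move=> Iy Sy Sx Hmin; apply: contrapT => nIx.
have Ex := simplex_edom Sx.
set d : V := y - x; pose u (t : R) : V := x + t *: d.
have u_conv t : u t = t *: y + (1 - t) *: x by apply/rowP => j; rewrite !mxE; ring.
have Iu (t : R) : 0 < t <= 1 -> interior (edom h) (u t).
  by move=> Ht; rewrite u_conv; exact: interior_conv.
have Su (t : R) : 0 < t <= 1 -> simp (u t).
  by move=> /andP[t0 t1]; rewrite u_conv; apply: simplex_conv; rewrite ?(ltW t0).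
set L := f y - `|dotv (grad h y) d|; set C := dotv q d.
have fu_ge (t : R) : 0 < t <= 1 -> L <= f (u t).
  move=> Ht; have := subgradient Iy (simplex_edom (Su t Ht)).
  have -> : u t - y = - ((1 - t) *: d) by apply/rowP => j; rewrite !mxE; ring.
  rewrite dotvNr dotvZr /L; case/andP: Ht => t0 t1.
  have := ler_norm (dotv (grad h y) d); have := ler_norm (- dotv (grad h y) d).
  rewrite normrN; nra.
have grad_dir (t : R) : 0 < t <= 1 -> - `|C| <= dotv (grad h (u t)) (y - u t).
  move=> Ht; have := Hmin _ (Su t Ht); have := subgradient (Iu t Ht) Ex.
  have -> : x - u t = - (t *: d) by apply/rowP => j; rewrite !mxE; ring.
  have -> : y - u t = (1 - t) *: d by apply/rowP => j; rewrite !mxE; ring.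
  rewrite {2}/u dotvDr !dotvNr !dotvZr -/C; case/andP: Ht => t0 t1.
  set G := dotv _ d => Hsub Hm.
  have GC : - C <= G by rewrite -(ler_pM2l t0) mulrN; lra.
  have := ler_norm C; have := normr_ge0 C; nra.
have [B HB] := grad_bounded L `|C| Iy.
have Ht k : 0 < (harmonic k : R) <= 1 by rewrite harmonic_gt0 invf_le1 // ler1n.
case: hL => [_ _ _ [_ [_ Hes]] _].
have Hcv : (fun k => u (harmonic k)) @ \oo --> x.
  have := cvgD (cvg_cst x) (cvgZr_tmp (a:=d) (@cvg_harmonic R)).
  by move=> /(_ eventually_filter eventually_filter eventually_filter); rewrite scale0r addr0.
have /cvgryPge /(_ (B + 1)) /filter_ex [k /= Hk] :=
  Hes _ _ (fun k => Iu _ (Ht k)) Hcv nIx.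
have := HB _ (Iu _ (Ht k)) (fu_ge _ (Ht k)) (grad_dir _ (Ht k)); lra.
Qed.

Lemma minimizer_first_order (q x : V) :
  interior (edom h) x -> simp x ->
  (forall p, simp p -> dotv q x + f x <= dotv q p + f p) ->
  forall p, simp p -> - dotv q (p - x) <= dotv (grad h x) (p - x).
Proof.
move=> Ix Sx Hmin p Sp.
have Hc := cvg_diff_quotient_right (d := p - x) (interior_differentiable Ix).
apply: (cvgr_to_ge Hc).
near=> s.
have s0 : 0 < s by near: s; exact: nbhs_right_gt.
have s1 : s < 1 by near: s; exact: nbhs_right_lt.
have := Hmin _ (simplex_conv Sp Sx (t:=s) (ltac:(by rewrite !ltW))).
have -> : s *: p + (1 - s) *: x = x + s *: (p - x) by apply/rowP => j; rewrite !mxE; ring.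
rewrite dotvDr dotvZr ler_pdivlMl //=; nra.
Unshelve. all: by end_near. Qed.

Lemma bregman_step_min (q : V) (eta : R) (x y : V) :
  (forall p, simp p -> eta * dotv q x + bregman h x y <= eta * dotv q p + bregman h p y) ->
  forall p, simp p ->
    dotv (eta *: q - grad h y) x + f x <= dotv (eta *: q - grad h y) p + f p.
Proof.
by move=> Hmin p Sp; move: (Hmin p Sp); rewrite /bregman !dotvBl !dotvZl !dotvBr /=; lra.
Qed.

Lemma three_point (q : V) (eta : R) (x y : V) :
  interior (edom h) x -> simp x ->
  (forall p, simp p -> eta * dotv q x + bregman h x y <= eta * dotv q p + bregman h p y) ->
  forall p, simp p ->
  eta * dotv q x + bregman h x y + bregman h p x <= eta * dotv q p + bregman h p y.
Proof.
move=> Ix Sx Hmin p Sp.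
have := minimizer_first_order Ix Sx (bregman_step_min Hmin) Sp.
by rewrite /bregman dotvBl dotvZl !dotvBr /=; lra.
Qed.

End Legendre.

Lemma sum_delta_l (R : pzSemiRingType) (I : finType) (F : I -> R) i :
  \sum_j (i == j)%:R * F j = F i.
Proof.
rewrite (bigD1 i) //= eqxx mul1r big1 ?addr0 // => j ne.
by rewrite eq_sym (negbTE ne) mul0r.
Qed.

Lemma sum_delta_r (R : pzSemiRingType) (I : finType) (F : I -> R) i :
  \sum_j F j * (j == i)%:R = F i.
Proof.
rewrite (bigD1 i) //= eqxx mulr1 big1 ?addr0 // => j ne.
by rewrite (negbTE ne) mulr0.
Qed.

Lemma cvg_sum (R : realType) (I : finType) (F : I -> nat -> R) (l : I -> R) :
  (forall i, F i N @[N --> \oo] --> l i) ->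
  (\sum_i F i N) @[N --> \oo] --> \sum_i l i.
Proof.
move=> H; apply: (cvg_big (op := +%R) (x0 := 0) (P := xpredT)) => //.
exact: add_continuous.
Qed.

Lemma geometric_sum_le (R : realFieldType) (gamma : R) N : 0 <= gamma < 1 ->
  \sum_(t < N) gamma ^+ t <= (1 - gamma)^-1.
Proof.
move=> /andP[g0 g1]; have a0 : 0 < 1 - gamma by rewrite subr_gt0.
rewrite -[X in _ <= X]mulr1 ler_pdivlMl //.
have -> : (1 - gamma) * \sum_(t < N) gamma ^+ t = 1 - gamma ^+ N.
  by rewrite -opprB mulNr -subrX1 opprB.
by rewrite lerBlDr lerDl exprn_ge0.
Qed.

Section MarkovChain.
Variables (R : realType) (S : finType) (n : nat).
Variables (P : S -> 'I_n -> S -> R) (c : S -> 'I_n -> R) (gamma : R).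
Hypothesis HP : forall s a, is_distr (P s a).
Hypothesis Hc : forall s a, 0 <= c s a <= 1.
Hypothesis Hg : 0 < gamma < 1.

Let gamma_ge0 : 0 <= gamma. Proof. by case/andP: Hg => /ltW. Qed.
Let gamma_lt1 : gamma < 1. Proof. by case/andP: Hg. Qed.

Lemma Ppi_ge0 pi s s' : is_policy pi -> 0 <= Ppi P pi s s'.
Proof.
move=> Hpi; apply: sumr_ge0 => a _; apply: mulr_ge0.
  exact: (proj1 (Hpi s)).
exact: (proj1 (HP s a)).
Qed.

Lemma Ppi_sum1 pi s : is_policy pi -> \sum_s' Ppi P pi s s' = 1.
Proof.
move=> Hpi; rewrite /Ppi exchange_big /= -(proj2 (Hpi s)); apply: eq_bigr => a _.
by rewrite -mulr_sumr (proj2 (HP s a)) mulr1.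
Qed.

Lemma cpi_ge0_le1 pi s : is_policy pi -> 0 <= cpi c pi s <= 1.
Proof.
move=> Hpi; apply/andP; split.
  apply: sumr_ge0 => a _; apply: mulr_ge0; first exact: (proj1 (Hpi s)).
  by case/andP: (Hc s a).
rewrite -(proj2 (Hpi s)); apply: ler_sum => a _.
by rewrite ler_piMr //; [exact: (proj1 (Hpi s)) | case/andP: (Hc s a)].
Qed.

Lemma prob_ge0 pi t s s' : is_policy pi -> 0 <= prob P pi t s s'.
Proof.
move=> Hpi; elim: t s s' => [|t IH] s s' /=; first exact: ler0n.
by apply: sumr_ge0 => m _; apply: mulr_ge0 => //; exact: Ppi_ge0.
Qed.

Lemma prob_sum1 pi t s : is_policy pi -> \sum_s' prob P pi t s s' = 1.
Proof.
move=> Hpi; elim: t s => [|t IH] s /=.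
  by rewrite -[RHS](sum_delta_l (fun=> 1 : R) s); apply: eq_bigr => s' _; rewrite mulr1.
rewrite exchange_big /= -(IH s); apply: eq_bigr => m _.
by rewrite -mulr_sumr Ppi_sum1 // mulr1.
Qed.

(* [prob] is defined by a last-step recursion; this is the first-step one. *)
Lemma probS pi t s s' : prob P pi t.+1 s s' = \sum_m Ppi P pi s m * prob P pi t m s'.
Proof.
elim: t s s' => [|t IH] s s'; first by rewrite /= sum_delta_l sum_delta_r.
transitivity (\sum_s'' (\sum_m Ppi P pi s m * prob P pi t m s'') * Ppi P pi s'' s').
  by apply: eq_bigr => s'' _; rewrite -IH.
under eq_bigr do rewrite mulr_suml.
rewrite exchange_big; apply: eq_bigr => m _ /=; rewrite mulr_sumr.
by apply: eq_bigr => s'' _; rewrite mulrA.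
Qed.

Definition disc_sum pi (x : S -> R) N s :=
  \sum_(t < N) gamma ^+ t * \sum_s' prob P pi t s s' * x s'.

Lemma disc_sumS pi x N s :
  disc_sum pi x N.+1 s = x s + gamma * \sum_m Ppi P pi s m * disc_sum pi x N m.
Proof.
rewrite /disc_sum big_ord_recl; congr (_ + _); first by rewrite expr0 mul1r /= sum_delta_l.
under eq_bigr do rewrite lift0.
transitivity (\sum_(i < N) \sum_m \sum_s'
    gamma ^+ i.+1 * (Ppi P pi s m * (prob P pi i m s' * x s'))).
  apply: eq_bigr => i _; rewrite mulr_sumr.
  under eq_bigr do rewrite probS mulr_suml mulr_sumr.
  rewrite exchange_big; apply: eq_bigr => m _; apply: eq_bigr => s' _.
  by rewrite !mulrA.
rewrite exchange_big mulr_sumr; apply: eq_bigr => m _.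
rewrite mulrA mulr_sumr; apply: eq_bigr => i _.
rewrite mulr_sumr mulr_sumr; apply: eq_bigr => s' _.
by rewrite exprS; ring.
Qed.

Definition bellman_fix pi (x w : S -> R) :=
  forall s, w s = x s + gamma * \sum_m Ppi P pi s m * w m.

Lemma disc_sum_lim_fix pi x w :
  (forall s, disc_sum pi x N s @[N --> \oo] --> w s) -> bellman_fix pi x w.
Proof.
move=> Hcv s.
have H1 : (x s + gamma * \sum_m Ppi P pi s m * disc_sum pi x N m) @[N --> \oo] --> w s.
  by under eq_fun do rewrite -disc_sumS; move: (Hcv s); rewrite -cvg_shiftS.
have H2 : (x s + gamma * \sum_m Ppi P pi s m * disc_sum pi x N m) @[N --> \oo] -->
          x s + gamma * \sum_m Ppi P pi s m * w m.
  apply: cvgD; first exact: cvg_cst.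
  by apply: cvgMl_tmp; apply: cvg_sum => m; apply: cvgMl_tmp; exact: Hcv.
exact: cvg_unique H1 H2.
Qed.

(* The Bellman operator of a policy is a [gamma]-contraction in the sup norm. *)
Lemma bellman_fix_unique pi x w1 w2 : is_policy pi ->
  bellman_fix pi x w1 -> bellman_fix pi x w2 -> forall s, w1 s = w2 s.
Proof.
move=> Hpi H1 H2.
set M := \big[Num.max/0]_m `|w1 m - w2 m|.
have le_M s : `|w1 s - w2 s| <= M by exact: (le_bigmax 0 (fun m => `|w1 m - w2 m|) s).
have contr s : `|w1 s - w2 s| <= gamma * M.
  have -> : w1 s - w2 s = gamma * \sum_m Ppi P pi s m * (w1 m - w2 m).
    rewrite {1}(H1 s) {1}(H2 s).
    under [in RHS]eq_bigr do rewrite mulrBr.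
    by rewrite sumrB; ring.
  rewrite normrM (ger0_norm gamma_ge0) ler_wpM2l //.
  apply: (le_trans (ler_norm_sum _ _ _)).
  rewrite -[M]mul1r -(Ppi_sum1 s Hpi) mulr_suml; apply: ler_sum => m _.
  by rewrite normrM (ger0_norm (Ppi_ge0 _ _ Hpi)) ler_wpM2l ?Ppi_ge0.
have M_ge0 : 0 <= M by exact: bigmax_ge_id.
have M_le : M <= gamma * M.
  by apply/bigmax_leP; split => [|m _]; [rewrite mulr_ge0 | exact: contr].
have M0 : M <= 0 by have := gamma_lt1; nra.
by move=> s; apply/eqP; rewrite -subr_eq0 -normr_le0; apply: le_trans (le_M s) M0.
Qed.

Lemma disc_sum_cvg pi x B s : is_policy pi -> (forall s, 0 <= x s <= B) ->
  [/\ cvgn (fun N => disc_sum pi x N s),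
      (forall N, disc_sum pi x N s <= limn (fun N => disc_sum pi x N s)) &
      limn (fun N => disc_sum pi x N s) <= B / (1 - gamma)].
Proof.
move=> Hpi Hx.
have B0 : 0 <= B by case/andP: (Hx s); exact: le_trans.
have nd : nondecreasing_seq (fun N => disc_sum pi x N s).
  apply/nondecreasing_seqP => N; rewrite /disc_sum big_ord_recr /= lerDl.
  rewrite mulr_ge0 ?exprn_ge0 // sumr_ge0 // => s' _.
  by rewrite mulr_ge0 ?prob_ge0 //; case/andP: (Hx s').
have ub N : disc_sum pi x N s <= B / (1 - gamma).
  apply: (@le_trans _ _ (B * \sum_(t < N) gamma ^+ t)); last first.
    by rewrite ler_wpM2l // geometric_sum_le // gamma_ge0.
  rewrite /disc_sum mulr_sumr; apply: ler_sum => t _.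
  rewrite mulrC ler_wpM2r ?exprn_ge0 //.
  rewrite -[B]mul1r -(prob_sum1 t s Hpi) mulr_suml; apply: ler_sum => s' _.
  by rewrite ler_wpM2l ?prob_ge0 //; case/andP: (Hx s').
have cv : cvgn (fun N => disc_sum pi x N s).
  by apply: nondecreasing_is_cvgn => //; exists (B / (1 - gamma)) => _ [N _ <-].
split => //; first exact: nondecreasing_cvgn_le.
by apply: limr_le => //; apply: nearW.
Qed.

Lemma Vf_bellman pi : is_policy pi -> bellman_fix pi (cpi c pi) (Vf P c gamma pi).
Proof.
move=> Hpi; apply: disc_sum_lim_fix => s.
by have [] := disc_sum_cvg s Hpi (fun s => cpi_ge0_le1 s Hpi).
Qed.

Lemma Vf_ge0_le pi s : is_policy pi -> 0 <= Vf P c gamma pi s <= (1 - gamma)^-1.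
Proof.
move=> Hpi; have [_ le lim] := disc_sum_cvg s Hpi (fun s => cpi_ge0_le1 s Hpi).
apply/andP; split; last by rewrite -[_^-1]mul1r.
by apply: le_trans (le 0%N); rewrite /disc_sum big_ord0.
Qed.

Definition occ pi s s' := limn (fun N => \sum_(t < N) gamma ^+ t * prob P pi t s s').

Lemma dvis_occ pi s s' : dvis P gamma pi s s' = (1 - gamma) * occ pi s s'.
Proof. by []. Qed.

Lemma occ_cvg pi s s' : is_policy pi ->
  (\sum_(t < N) gamma ^+ t * prob P pi t s s') @[N --> \oo] --> occ pi s s' /\
  forall N, \sum_(t < N) gamma ^+ t * prob P pi t s s' <= occ pi s s'.
Proof.
move=> Hpi.
have E N : \sum_(t < N) gamma ^+ t * prob P pi t s s' =
           disc_sum pi (fun m => (m == s')%:R) N s.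
  by apply: eq_bigr => t _; rewrite sum_delta_r.
have Hx m : 0 <= ((m == s')%:R : R) <= 1 by case: (m == s'); rewrite ?lexx ?ler01.
have [cv le _] := disc_sum_cvg s Hpi Hx.
by rewrite /occ (funext E); split => // N; rewrite E.
Qed.

Lemma occ_ge0 pi s s' : is_policy pi -> 0 <= occ pi s s'.
Proof. by move=> Hpi; apply: le_trans (proj2 (occ_cvg s s' Hpi) 0%N); rewrite big_ord0. Qed.

Lemma occ_diag_ge1 pi s : is_policy pi -> 1 <= occ pi s s.
Proof.
move=> Hpi; apply: le_trans (proj2 (occ_cvg s s Hpi) 1%N).
by rewrite big_ord1 /= expr0 mul1r eqxx.
Qed.

Lemma occ_bellman pi (A : S -> R) : is_policy pi ->
  bellman_fix pi A (fun s => \sum_s' occ pi s s' * A s').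
Proof.
move=> Hpi; apply: disc_sum_lim_fix => s.
have -> : (fun N => disc_sum pi A N s) =
   (fun N => \sum_s' (\sum_(t < N) gamma ^+ t * prob P pi t s s') * A s').
  apply: funext => N; rewrite /disc_sum.
  under eq_bigr do rewrite mulr_sumr.
  rewrite exchange_big; apply: eq_bigr => s' _ /=; rewrite mulr_suml.
  by apply: eq_bigr => t _; rewrite mulrA.
by apply: cvg_sum => s'; apply: cvgMr_tmp; exact: (proj1 (occ_cvg s s' Hpi)).
Qed.

Lemma occ_sum pi s : is_policy pi -> \sum_s' occ pi s s' = (1 - gamma)^-1.
Proof.
move=> Hpi.
have Hcst : bellman_fix pi (fun=> 1) (fun=> (1 - gamma)^-1).
  move=> s0; rewrite -mulr_suml Ppi_sum1 // mul1r.
  by field; rewrite subr_eq0 eq_sym lt_eqF.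
rewrite -(bellman_fix_unique Hpi (occ_bellman (fun=> 1) Hpi) Hcst s).
by apply: eq_bigr => s' _; rewrite mulr1.
Qed.

Lemma sum_policy_Qf (pi pi' : policy R S n) s :
  \sum_a pi' s ord0 a * Qf P c gamma pi s a =
  cpi c pi' s + gamma * \sum_m Ppi P pi' s m * Vf P c gamma pi m.
Proof.
rewrite /Qf /cpi /Ppi.
under eq_bigr do rewrite mulrDr.
rewrite big_split /=; congr (_ + _).
rewrite mulr_sumr.
under [RHS]eq_bigr do rewrite mulr_suml mulr_sumr.
rewrite [RHS]exchange_big /=; apply: eq_bigr => a _.
rewrite !mulr_sumr; apply: eq_bigr => m _; ring.
Qed.

Definition advantage (pi pi' : policy R S n) s :=
  \sum_a (pi' s ord0 a - pi s ord0 a) * Qf P c gamma pi s a.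

(* Both sides solve the Bellman equation of [pi'] with cost [advantage pi pi']. *)
Lemma performance_difference pi pi' s : is_policy pi -> is_policy pi' ->
  Vf P c gamma pi' s - Vf P c gamma pi s =
  \sum_s' occ pi' s s' * advantage pi pi' s'.
Proof.
move=> Hpi Hpi'.
pose gap s := Vf P c gamma pi' s - Vf P c gamma pi s.
apply: (bellman_fix_unique (w1 := gap) Hpi' _ (occ_bellman _ Hpi')) => {}s.
have -> : advantage pi pi' s =
    cpi c pi' s + gamma * \sum_m Ppi P pi' s m * Vf P c gamma pi m - Vf P c gamma pi s.
  rewrite /advantage; under eq_bigr do rewrite mulrBl.
  by rewrite sumrB !sum_policy_Qf -Vf_bellman.
have -> : \sum_m Ppi P pi' s m * gap m =
    \sum_m Ppi P pi' s m * Vf P c gamma pi' m - \sum_m Ppi P pi' s m * Vf P c gamma pi m.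
  by rewrite -sumrB; apply: eq_bigr => m _; rewrite mulrBr.
by rewrite /gap {1}(Vf_bellman Hpi' s); ring.
Qed.

End MarkovChain.

Section InitialDistribution.
Variables (R : realType) (S : finType) (n : nat).
Variables (P : S -> 'I_n -> S -> R) (c : S -> 'I_n -> R) (gamma : R) (rho : S -> R).
Hypothesis HP : forall s a, is_distr (P s a).
Hypothesis Hc : forall s a, 0 <= c s a <= 1.
Hypothesis Hg : 0 < gamma < 1.
Hypothesis Hrho : is_distr rho.

Let gamma_lt1 : gamma < 1. Proof. by case/andP: Hg. Qed.

Lemma drho_ge0 pi s : is_policy pi -> 0 <= drho P gamma pi rho s.
Proof.
move=> Hpi; apply: sumr_ge0 => s0 _; rewrite mulr_ge0 ?(proj1 Hrho) //.
by rewrite dvis_occ mulr_ge0 ?occ_ge0 // subr_ge0 ltW.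
Qed.

Lemma drho_ge_rho pi s : is_policy pi -> (1 - gamma) * rho s <= drho P gamma pi rho s.
Proof.
move=> Hpi; rewrite /drho (bigD1 s) //= -[X in X <= _]addr0; apply: lerD.
  rewrite dvis_occ mulrCA; apply: ler_wpM2l; first by rewrite subr_ge0 ltW.
  by apply: ler_peMr; [exact: (proj1 Hrho) | exact: occ_diag_ge1].
apply: sumr_ge0 => s0 _; rewrite mulr_ge0 ?(proj1 Hrho) //.
by rewrite dvis_occ mulr_ge0 ?occ_ge0 // subr_ge0 ltW.
Qed.

Lemma drho_sum1 pi : is_policy pi -> \sum_s drho P gamma pi rho s = 1.
Proof.
move=> Hpi; rewrite /drho exchange_big /= -(proj2 Hrho); apply: eq_bigr => s _.
rewrite -mulr_sumr; under eq_bigr do rewrite dvis_occ.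
by rewrite -mulr_sumr occ_sum // mulfV ?mulr1 // subr_eq0 eq_sym lt_eqF.
Qed.

Lemma performance_difference_rho pi pi' : is_policy pi -> is_policy pi' ->
  (1 - gamma) * (Vrho P c gamma pi' rho - Vrho P c gamma pi rho) =
  \sum_s drho P gamma pi' rho s * advantage P c gamma pi pi' s.
Proof.
move=> Hpi Hpi'; rewrite /Vrho -sumrB.
under eq_bigr do rewrite -mulrBr (performance_difference HP Hc Hg _ Hpi Hpi').
rewrite mulr_sumr /drho.
under [RHS]eq_bigr do rewrite mulr_suml.
rewrite [RHS]exchange_big /=; apply: eq_bigr => s _.
rewrite mulrA mulr_sumr; apply: eq_bigr => s' _.
by rewrite dvis_occ; ring.
Qed.

Lemma Vrho_ge0_le pi : is_policy pi -> 0 <= Vrho P c gamma pi rho <= (1 - gamma)^-1.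
Proof.
move=> Hpi; apply/andP; split.
  apply: sumr_ge0 => s _; rewrite mulr_ge0 ?(proj1 Hrho) //.
  by case/andP: (Vf_ge0_le HP Hc Hg s Hpi).
apply: (@le_trans _ _ (\sum_s rho s * (1 - gamma)^-1)).
  apply: ler_sum => s _; rewrite ler_wpM2l ?(proj1 Hrho) //.
  by case/andP: (Vf_ge0_le HP Hc Hg s Hpi).
by rewrite -mulr_suml (proj2 Hrho) mul1r.
Qed.

Lemma Vstar_optimal pistar : is_policy pistar ->
  (forall p, is_policy p -> forall s, Vf P c gamma pistar s <= Vf P c gamma p s) ->
  Vstar P c gamma rho = Vrho P c gamma pistar rho.
Proof.
move=> Hpis Hopt; rewrite /Vstar; set E := (X in inf X).
have Elb y : E y -> Vrho P c gamma pistar rho <= y.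
  move=> [p Hp <-]; apply: ler_sum => s _.
  by rewrite ler_wpM2l ?(proj1 Hrho) ?Hopt.
have E_star : E (Vrho P c gamma pistar rho) by exists pistar.
apply/eqP; rewrite eq_le; apply/andP; split.
  by apply: (ge_inf _ E_star); exists (Vrho P c gamma pistar rho).
by apply: lb_le_inf => //; exists (Vrho P c gamma pistar rho).
Qed.

End InitialDistribution.

Lemma ratio_norm_le (R : realType) (S : finType) (p q : S -> R) (r : R) :
  (forall s, 0 <= q s) -> ratio_norm p q = r%:E -> forall s, p s <= r * q s.
Proof.
move=> q0 Hr s; have : (ratio_norm p q <= r%:E)%E by rewrite Hr.
move/bigmax_leP => [_ /(_ s isT)].
have [->|qn0] := eqVneq (q s) 0.
  by rewrite mulr0; have [->|pn0] := eqVneq (p s) 0; rewrite ?leye_eq.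
by rewrite lee_fin ler_pdivrMr // lt_neqAle eq_sym qn0 q0.
Qed.

Lemma EFin_invM_eq (R : realType) (a th : R) (x : \bar R) : 0 < a ->
  (a^-1%:E * x)%E = th%:E -> x = (a * th)%:E.
Proof.
move=> a0; case: x => [r [<-]||]; last 2 first.
- by rewrite mulry gtr0_sg ?invr_gt0 // mul1e.
- by rewrite mulrNy gtr0_sg ?invr_gt0 // mul1e.
by rewrite mulrA mulfV ?gt_eqF // mul1r.
Qed.

Lemma dotv_err_le (R : realType) (n : nat) (Qh Q : 'I_n -> R) (tau : R) (v w : 'rV[R]_n) :
  simplex v -> simplex w -> (forall a, `|Qh a - Q a| <= tau) ->
  `|(dotv (\row_a Qh a) v - dotv (\row_a Qh a) w) -
      \sum_a (v ord0 a - w ord0 a) * Q a| <= 2 * tau.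
Proof.
move=> [v0 v1] [w0 w1] HQ.
rewrite !dotv_row -!sumrB.
rewrite (eq_bigr (fun a => (v ord0 a - w ord0 a) * (Qh a - Q a))); last by move=> a _; ring.
apply: (le_trans (ler_norm_sum _ _ _)).
apply: (@le_trans _ _ (\sum_a (v ord0 a + w ord0 a) * tau)).
  apply: ler_sum => a _; rewrite normrM ler_pM //.
  by apply: (le_trans (ler_normB _ _)); rewrite !ger0_norm.
by rewrite -mulr_suml big_split /= v1 w1 mulrC.
Qed.

Lemma geometric_iter (R : realFieldType) (x : nat -> R) (a b : R) :
  0 <= a < 1 -> 0 <= b -> (forall k, x k.+1 <= a * x k + b) ->
  forall k, x k <= a ^+ k * x 0%N + b / (1 - a).
Proof.
move=> /andP[a0 a1] b0 Hx; have a1' : 1 - a != 0 by rewrite subr_eq0 eq_sym lt_eqF.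
elim=> [|k IH]; first by rewrite expr0 mul1r lerDl divr_ge0 // subr_ge0 ltW.
apply: (le_trans (Hx k)).
have -> : a ^+ k.+1 * x 0%N + b / (1 - a) = a * (a ^+ k * x 0%N + b / (1 - a)) + b.
  by rewrite exprS; field.
by rewrite lerD2r ler_wpM2l.
Qed.

Section PotentialRecursion.
Variables (R : realFieldType) (gamma th tau : R) (gap D eta : nat -> R).
Hypothesis Hg : 0 < gamma < 1.
Hypothesis Hth : 1 <= (1 - gamma) * th.
Hypothesis Htau : 0 <= tau.
Hypothesis Heta : forall k, 0 < eta k.
Hypothesis HD : forall k, 0 <= D k.
Hypothesis Heta_step : forall k, eta k <= gamma * eta k.+1.
Hypothesis HD0 : (1 - gamma) * D 0%N <= gamma * eta 0%N.
Hypothesis Hgap0 : (1 - gamma) * gap 0%N <= 1.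
Hypothesis Hstep : forall k, eta k *
    ((1 - gamma) * th * (gap k.+1 - gap k) + (1 - gamma) * gap k - 2 * tau * (th + 1))
  <= D k - D k.+1.

Let gamma_gt0 : 0 < gamma. Proof. by case/andP: Hg. Qed.
Let a_gt0 : 0 < 1 - gamma. Proof. by rewrite subr_gt0; case/andP: Hg. Qed.
Let th_gt1 : 1 < th.
Proof.
rewrite -(ltr_pM2l a_gt0) mulr1; apply: lt_le_trans Hth.
by rewrite ltrBlDr ltrDl gamma_gt0.
Qed.
Let th_gt0 : 0 < th. Proof. exact: lt_trans ltr01 th_gt1. Qed.
Let th_neq0 : th != 0. Proof. by rewrite gt_eqF. Qed.
Let th1_gt0 : 0 < th - 1. Proof. by rewrite subr_gt0. Qed.
Let th1_neq0 : th - 1 != 0. Proof. by rewrite gt_eqF. Qed.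
Let a_neq0 : 1 - gamma != 0. Proof. by rewrite gt_eqF. Qed.

Definition bregman_weight k := ((1 - gamma) * eta k * (th - 1))^-1.

Definition potential k := gap k + D k * bregman_weight k.

Let weight_contract k : (1 - th^-1) * bregman_weight k = ((1 - gamma) * th * eta k)^-1.
Proof. by rewrite /bregman_weight; field; rewrite th_neq0 th1_neq0 a_neq0 gt_eqF. Qed.

(* This is where the step-size rule [eta k <= gamma * eta k.+1] enters. *)
Let weight_next k : bregman_weight k.+1 <= (1 - th^-1) * bregman_weight k.
Proof.
have ek := Heta k; have ek1 := Heta k.+1; have := Heta_step k; have hth := Hth.
rewrite weight_contract /bregman_weight lef_pV2 ?posrE ?mulr_gt0 // => Hek.
have X : gamma * th <= th - 1 by lra.
have Y : 0 <= (1 - gamma) * th by rewrite mulr_ge0 // ltW.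
have Z : 0 <= (1 - gamma) * eta k.+1 by rewrite mulr_ge0 // ltW.
nra.
Qed.

Let gap_step k :
  gap k.+1 <= (1 - th^-1) * gap k + ((1 - gamma) * th * eta k)^-1 * (D k - D k.+1)
              + 2 * tau * (th + 1) / ((1 - gamma) * th).
Proof.
have ek := Heta k; have A0 : 0 < (1 - gamma) * th by rewrite mulr_gt0.
have Hk : (1 - gamma) * th * (gap k.+1 - gap k) + (1 - gamma) * gap k - 2 * tau * (th + 1)
          <= (D k - D k.+1) / eta k by rewrite ler_pdivlMr // mulrC.
rewrite -(ler_pM2l A0).
have -> : (1 - gamma) * th * ((1 - th^-1) * gap k + ((1 - gamma) * th * eta k)^-1 *
      (D k - D k.+1) + 2 * tau * (th + 1) / ((1 - gamma) * th)) =
    ((1 - gamma) * th - (1 - gamma)) * gap k + (D k - D k.+1) / eta k + 2 * tau * (th + 1).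
  by field; rewrite th_neq0 a_neq0 gt_eqF.
lra.
Qed.

Lemma potential_step k :
  potential k.+1 <= (1 - th^-1) * potential k + 2 * tau * (th + 1) / ((1 - gamma) * th).
Proof.
have := lerD (gap_step k) (ler_wpM2l (HD k.+1) (weight_next k)).
rewrite /potential -weight_contract => /le_trans; apply.
by rewrite le_eqVlt; apply/orP; left; apply/eqP; ring.
Qed.

Lemma potential0_le : (1 - gamma) * potential 0%N <= 2.
Proof.
have e0 := Heta 0%N; have D0 := HD 0%N; have hth := Hth; have hD0 := HD0.
have hgap0 := Hgap0.
have -> : (1 - gamma) * potential 0%N =
          (1 - gamma) * gap 0%N + D 0%N / (eta 0%N * (th - 1)).
  by rewrite /potential /bregman_weight; field; rewrite a_neq0 th1_neq0 gt_eqF.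
suff H : D 0%N / (eta 0%N * (th - 1)) <= 1 by lra.
rewrite ler_pdivrMr ?mulr_gt0 // mul1r.
have X : gamma <= (1 - gamma) * (th - 1) by lra.
have Xe := ler_wpM2r (ltW e0) X.
by rewrite -(ler_pM2l a_gt0); apply: le_trans hD0 _; lra.
Qed.

Lemma gap_le_rate k :
  gap k <= (1 - th^-1) ^+ k * (2 / (1 - gamma)) + 4 * th / (1 - gamma) * tau.
Proof.
have r01 : 0 <= 1 - th^-1 < 1.
  apply/andP; split; first by rewrite subr_ge0 invf_le1 // ltW.
  by rewrite ltrBlDr ltrDl invr_gt0.
have e0 : 0 <= 2 * tau * (th + 1) / ((1 - gamma) * th).
  apply: divr_ge0; last by rewrite mulr_ge0 // ltW.
  by rewrite !mulr_ge0 ?ler0n // addr_ge0 // ltW.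
have := geometric_iter r01 e0 potential_step k.
rewrite (_ : 1 - (1 - th^-1) = th^-1) ?invrK; last by ring.
have -> : 2 * tau * (th + 1) / ((1 - gamma) * th) * th = 2 * tau * (th + 1) / (1 - gamma).
  by field; rewrite th_neq0 a_neq0.
have gap_pot : gap k <= potential k.
  by rewrite /potential lerDl mulr_ge0 // invr_ge0 ltW // !mulr_gt0.
move=> Hpot; apply: (le_trans gap_pot); apply: (le_trans Hpot); apply: lerD.
  rewrite ler_wpM2l ?exprn_ge0 //; first by case/andP: r01.
  by rewrite ler_pdivlMr // mulrC potential0_le.
have -> : 4 * th / (1 - gamma) * tau = 4 * th * tau / (1 - gamma) by rewrite mulrAC.
rewrite ler_pM2r ?invr_gt0 //.
by have := mulr_ge0 Htau (ltW th1_gt0) => H; lra.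
Qed.

End PotentialRecursion.

Section InexactPolicyMirrorDescent.
Variables (R : realType) (S : finType) (n : nat).
Variables (P : S -> 'I_n -> S -> R) (c : S -> 'I_n -> R) (gamma : R).
Variables (h : 'rV[R]_n -> \bar R) (pistar : policy R S n) (rho : S -> R).
Variables (pi : nat -> policy R S n) (Qhat : nat -> S -> 'I_n -> R) (eta : nat -> R).
Variable tau : R.
Hypothesis HP : forall s a, is_distr (P s a).
Hypothesis Hc : forall s a, 0 <= c s a <= 1.
Hypothesis Hg : 0 < gamma < 1.
Hypothesis hL : legendre h.
Hypothesis Hsimp : @simplex R n `<=` edom h.
Hypothesis Hrint : rint (@simplex R n) `<=` rint (edom h).
Hypothesis Hpis : is_policy pistar.
Hypothesis Hrho : is_distr rho.
Hypothesis Hpi0 : rint_policy (pi 0%N).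
Hypothesis HQ : forall k s a, `|Qhat k s a - Qf P c gamma (pi k) s a| <= tau.
Hypothesis Hmd : forall k s, @simplex R n (pi k.+1 s) /\
  forall p, @simplex R n p ->
    eta k * dotv (\row_a Qhat k s a) (pi k.+1 s) + bregman h (pi k.+1 s) (pi k s)
    <= eta k * dotv (\row_a Qhat k s a) p + bregman h p (pi k s).
Hypothesis Heta : forall k, 0 < eta k.

Local Notation Qh k s := (\row_a Qhat k s a).
Local Notation dstar := (drho P gamma pistar rho).
Local Notation gap k := (Vrho P c gamma (pi k) rho - Vrho P c gamma pistar rho).
Local Notation Dstar k := (\sum_s dstar s * bregman h (pistar s) (pi k s)).

Let a_gt0 : 0 < 1 - gamma. Proof. by rewrite subr_gt0; case/andP: Hg. Qed.

Lemma iterate_policy k : is_policy (pi k).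
Proof. by case: k => [|k] s; [exact: (proj1 Hpi0 s) | exact: (proj1 (Hmd k s))]. Qed.

Lemma iterate_interior k s : interior (edom h) (pi k s).
Proof.
have I0 s' : interior (edom h) (pi 0%N s').
  by apply/(rint_edom_interior hL)/Hrint/rint_simplex; [exact: (proj1 Hpi0) | exact: (proj2 Hpi0)].
case: k => [|k]; first exact: I0.
apply: (minimizer_interior hL Hsimp (I0 s) (proj1 Hpi0 s) (proj1 (Hmd k s))).
exact: (bregman_step_min (proj2 (Hmd k s))).
Qed.

Lemma step_bregman_ge0 k s : 0 <= bregman h (pi k.+1 s) (pi k s).
Proof. exact: (bregman_ge0 hL (iterate_interior k s) (Hsimp (iterate_policy k.+1 s))). Qed.

Lemma step_value_nonincrease k s :
  dotv (Qh k s) (pi k.+1 s) <= dotv (Qh k s) (pi k s).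
Proof.
have := three_point hL (iterate_interior k.+1 s) (proj1 (Hmd k s)) (proj2 (Hmd k s))
  (iterate_policy k s).
have B1 := bregman_ge0 hL (iterate_interior k.+1 s) (Hsimp (iterate_policy k s)).
have B2 := step_bregman_ge0 k s.
rewrite bregmanxx => H3; rewrite -(ler_pM2l (Heta k)); lra.
Qed.

Lemma step_three_point_star k s :
  eta k * (dotv (Qh k s) (pi k.+1 s) - dotv (Qh k s) (pistar s)) <=
  bregman h (pistar s) (pi k s) - bregman h (pistar s) (pi k.+1 s).
Proof.
have := three_point hL (iterate_interior k.+1 s) (proj1 (Hmd k s)) (proj2 (Hmd k s)) (Hpis s).
have B := step_bregman_ge0 k s.
move=> H3; lra.
Qed.

Lemma tau_ge0 : 0 <= tau.
Proof.
have [s0 _] : exists s : S, True.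
  case: (pickP (fun _ : S => true)) => [s0 _|H0]; first by exists s0.
  by move: (proj2 Hrho); rewrite big_pred0 // => /eqP; rewrite eq_sym oner_eq0.
have [a0 _] : exists a : 'I_n, True.
  case: (pickP (fun _ : 'I_n => true)) => [a0 _|H0]; first by exists a0.
  by move: (proj2 (Hpis s0)); rewrite big_pred0 // => /eqP; rewrite eq_sym oner_eq0.
exact: le_trans (normr_ge0 _) (HQ 0%N s0 a0).
Qed.

Lemma Dstar_ge0 k : 0 <= Dstar k.
Proof.
apply: sumr_ge0 => s _; rewrite mulr_ge0 ?drho_ge0 //.
exact: (bregman_ge0 hL (iterate_interior k s) (Hsimp (Hpis s))).
Qed.

Lemma Dstar_descent k :
  eta k * \sum_s dstar s * (dotv (Qh k s) (pi k.+1 s) - dotv (Qh k s) (pistar s))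
  <= Dstar k - Dstar k.+1.
Proof.
rewrite mulr_sumr -sumrB; apply: ler_sum => s _.
rewrite mulrCA -mulrBr ler_wpM2l ?drho_ge0 //; exact: step_three_point_star.
Qed.

Lemma Qhat_advantage_err k s (p : policy R S n) : is_policy p ->
  `|(dotv (Qh k s) (p s) - dotv (Qh k s) (pi k s)) - advantage P c gamma (pi k) p s|
  <= 2 * tau.
Proof. by move=> Hp; apply: dotv_err_le (Hp s) (iterate_policy k s) _ => a; exact: HQ. Qed.

Lemma theta_ge th : (forall s, dstar s <= (1 - gamma) * th * rho s) ->
  1 <= (1 - gamma) * th.
Proof.
move=> Hd; have : \sum_s dstar s <= \sum_s (1 - gamma) * th * rho s by exact: ler_sum.
by rewrite (drho_sum1 HP Hg Hrho Hpis) -mulr_sumr (proj2 Hrho) mulr1.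
Qed.

(* Each step is compared through [dstar <= th * d(pi k.+1)], using that the step
   decreases the estimated value at every state. *)
Lemma improvement_lower_bound th k :
  (forall s, dstar s <= (1 - gamma) * th * rho s) ->
  (1 - gamma) * th * (gap k.+1 - gap k) - 2 * th * tau <=
  \sum_s dstar s * (dotv (Qh k s) (pi k.+1 s) - dotv (Qh k s) (pi k s)).
Proof.
move=> Hd; have th0 : 0 <= th.
  by rewrite -(ler_pM2l a_gt0) mulr0; apply: le_trans ler01 (theta_ge Hd).
have PD := performance_difference_rho rho HP Hc Hg (iterate_policy k) (iterate_policy k.+1).
set d1 := drho P gamma (pi k.+1) rho in PD *.
set A := advantage P c gamma (pi k) (pi k.+1) in PD *.
have -> : (1 - gamma) * th * (gap k.+1 - gap k) - 2 * th * tau =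
          \sum_s th * d1 s * (A s - 2 * tau).
  rewrite (eq_bigr (fun s => th * (d1 s * A s) - 2 * th * tau * d1 s)); last first.
    by move=> s _; ring.
  by rewrite sumrB -!mulr_sumr -PD (drho_sum1 HP Hg Hrho (iterate_policy k.+1)); ring.
apply: ler_sum => s _.
have /ler_normlP [xA _] := Qhat_advantage_err k s (iterate_policy k.+1).
rewrite -/(A s) in xA.
have xle0 := step_value_nonincrease k s.
have dle : dstar s <= th * d1 s.
  apply: le_trans (Hd s) _; rewrite [_ * th]mulrC -mulrA; apply: ler_wpM2l => //.
  exact: (drho_ge_rho HP Hg Hrho s (iterate_policy k.+1)).
have d1th : 0 <= th * d1 s.
  by rewrite mulr_ge0 //; exact: (drho_ge0 HP Hg Hrho s (iterate_policy k.+1)).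
rewrite -subr_le0 in xle0; set x := _ - _ in xle0 xA *.
have xA' : A s - 2 * tau <= x by lra.
apply: le_trans (ler_wpM2l d1th xA') _.
exact: (ler_wnM2r xle0 dle).
Qed.

Lemma gap_lower_bound k :
  (1 - gamma) * gap k - 2 * tau <=
  \sum_s dstar s * (dotv (Qh k s) (pi k s) - dotv (Qh k s) (pistar s)).
Proof.
have PD := performance_difference_rho rho HP Hc Hg (iterate_policy k) Hpis.
set A := advantage P c gamma (pi k) pistar in PD *.
have -> : (1 - gamma) * gap k - 2 * tau = \sum_s dstar s * (- A s - 2 * tau).
  rewrite (eq_bigr (fun s => - (dstar s * A s) - 2 * tau * dstar s)); last first.
    by move=> s _; ring.
  by rewrite sumrB sumrN -mulr_sumr (drho_sum1 HP Hg Hrho Hpis) -PD; ring.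
apply: ler_sum => s _; rewrite ler_wpM2l ?drho_ge0 //.
have /ler_normlP [_ xA] := Qhat_advantage_err k s Hpis.
by rewrite -/(A s) in xA; lra.
Qed.

Lemma one_step_bound th k :
  (forall s, dstar s <= (1 - gamma) * th * rho s) ->
  eta k * ((1 - gamma) * th * (gap k.+1 - gap k) + (1 - gamma) * gap k - 2 * tau * (th + 1))
  <= Dstar k - Dstar k.+1.
Proof.
move=> Hd; apply: le_trans (Dstar_descent k); rewrite ler_pM2l ?Heta //.
have -> : \sum_s dstar s * (dotv (Qh k s) (pi k.+1 s) - dotv (Qh k s) (pistar s)) =
    \sum_s dstar s * (dotv (Qh k s) (pi k.+1 s) - dotv (Qh k s) (pi k s)) +
    \sum_s dstar s * (dotv (Qh k s) (pi k s) - dotv (Qh k s) (pistar s)).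
  by rewrite -big_split /=; apply: eq_bigr => s _; ring.
have Himp := improvement_lower_bound k Hd; have Hgap := gap_lower_bound k.
lra.
Qed.

Lemma gap_le_horizon k : gap k <= (1 - gamma)^-1.
Proof.
case/andP: (Vrho_ge0_le HP Hc Hg Hrho (iterate_policy k)) => _ Hk.
case/andP: (Vrho_ge0_le HP Hc Hg Hrho Hpis) => Hs _.
lra.
Qed.

Hypothesis Hopt : forall p, is_policy p ->
  forall s, Vf P c gamma pistar s <= Vf P c gamma p s.
Hypothesis Heta0 : (1 - gamma) / gamma * Dstar 0%N <= eta 0%N.
Hypothesis Heta_step : forall k, eta k / gamma <= eta k.+1.

Lemma suboptimality_le_rate th k :
  (((1 - gamma)^-1)%:E * ratio_norm dstar rho)%E = th%:E ->
  Vrho P c gamma (pi k) rho - Vstar P c gamma rho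
  <= (1 - th^-1) ^+ k * (2 / (1 - gamma)) + 4 * th / (1 - gamma) * tau.
Proof.
move=> Hth; case/andP: Hg => g0 g1.
have Hd := ratio_norm_le (fun s => proj1 Hrho s) (EFin_invM_eq a_gt0 Hth).
rewrite (Vstar_optimal Hrho Hpis Hopt).
apply: (gap_le_rate (gap := fun j => gap j) (D := fun j => Dstar j)) => //.
- exact: theta_ge.
- exact: tau_ge0.
- exact: Dstar_ge0.
- by move=> j; rewrite mulrC -ler_pdivrMr.
- rewrite -ler_pdivrMl // mulrA; apply: le_trans Heta0.
  by rewrite [gamma^-1 * _]mulrC.
- by rewrite -ler_pdivlMl // mulr1 gap_le_horizon.
- by move=> j; apply: one_step_bound.
Qed.

Lemma suboptimality_le k :
  Vrho P c gamma (pi k) rho - Vstar P c gamma rho <= 2 / (1 - gamma).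
Proof.
rewrite (Vstar_optimal Hrho Hpis Hopt); apply: le_trans (gap_le_horizon k) _.
by rewrite -[X in X <= _]mul1r ler_pM2r ?invr_gt0 // ler1n.
Qed.

End InexactPolicyMirrorDescent.

Unset Implicit Arguments. Set Strict Implicit.

Theorem theorem14 (R : realType) (S : finType) (n : nat)
  (P : S -> 'I_n -> S -> R) (c : S -> 'I_n -> R) (gamma : R)
  (h : 'rV[R]_n -> \bar R)
  (pistar : policy R S n) (rho : S -> R)
  (pi : nat -> policy R S n) (Qhat : nat -> S -> 'I_n -> R)
  (eta : nat -> R) (tau : R) :
  (* MDP *)
  (forall s a, is_distr (P s a)) ->
  (forall s a, 0 <= c s a <= 1) ->
  0 < gamma < 1 ->
  (* Bregman generator *)
  legendre h ->
  @simplex R n `<=` edom h ->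
  rint (@simplex R n) `<=` rint (edom h) ->
  (* optimal policy and initial distribution *)
  is_policy pistar ->
  (forall p, is_policy p -> forall s, Vf P c gamma pistar s <= Vf P c gamma p s) ->
  is_distr rho ->
  (* inexact policy mirror descent *)
  rint_policy (pi 0%N) ->
  (forall k s a, `|Qhat k s a - Qf P c gamma (pi k) s a| <= tau) ->
  (forall k s, @simplex R n (pi k.+1 s) /\
     forall p, @simplex R n p ->
       eta k * dotv (\row_a Qhat k s a) (pi k.+1 s) + bregman h (pi k.+1 s) (pi k s)
       <= eta k * dotv (\row_a Qhat k s a) p + bregman h p (pi k s)) ->
  (forall k, 0 < eta k) ->
  eta 0%N >= (1 - gamma) / gamma *
     \sum_s drho P gamma pistar rho s * bregman h (pistar s) (pi 0%N s) ->
  (forall k, eta k.+1 >= eta k / gamma) ->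
  let vartheta := (((1 - gamma)^-1)%:E * ratio_norm (drho P gamma pistar rho) rho)%E in
  forall k : nat,
    (forall th : R, vartheta = th%:E ->
       Vrho P c gamma (pi k) rho - Vstar P c gamma rho
       <= (1 - th^-1) ^+ k * (2 / (1 - gamma)) + 4 * th / (1 - gamma) * tau)
    /\
    (vartheta = +oo%E -> tau = 0 ->
       Vrho P c gamma (pi k) rho - Vstar P c gamma rho <= 2 / (1 - gamma)).
Proof.
move=> HP Hc Hg hL Hsimp Hrint Hpis Hopt Hrho Hpi0 HQ Hmd Heta Heta0 Heta_step vartheta k.
split=> [th Hth|_ _].
  exact: (suboptimality_le_rate HP Hc Hg hL Hsimp Hrint Hpis Hrho Hpi0 HQ Hmd Heta
    Hopt Heta0 Heta_step k Hth).
exact: (suboptimality_le HP Hc Hg Hpis Hrho Hpi0 Hmd Hopt k).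
Qed.
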